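(* Let $\mathcal R=\{\rho(x)x:x\in\bar\Omega\}$ be a near field refractor (in either case $\kappa<-1$ or $-1<\kappa<0$) and let $P\in\bar D$. Then $\mathcal T_{\mathcal R}(P)$ is a closed subset of $\bar\Omega$.
   Context: $\Omega\subset S^{n-1}$ domain with $|\partial\Omega|=0$; $D\subset\mathbb R^n$ in an $(n-1)$-dimensional hypersurface, $\bar D$ compact, $0\notin\bar D$. Case $\kappa<-1$: there is $\tau\in(0,1-\frac1\kappa)$ with $\inf_{x\in\bar\Omega,P\in\bar D}x\cdot\frac P{|P|}\ge\tau+\frac1\kappa$; $r_0\in(0,\frac{\tau^2\kappa^2}{(1+\sqrt2)^2(1-\kappa)^2}\inf_{\bar D}|P|)$; $h(x,P,b)=\frac{(\kappa^2x\cdot P-b)-\sqrt{(\kappa^2x\cdot P-b)^2-(\kappa^2-1)(\kappa^2|P|^2-b^2)}}{\kappa^2-1}$, $I(P,b)=\frac{b+\sqrt{(\kappa^2-1)(\kappa^2|P|^2-b^2)}}{\kappa^2|P|}$, $\Gamma(P,b)=\{h(x,P,b)x:x\cdot P\ge I(P,b)|P|\}$. Near field refractor: $\mathcal R=\{\rho(x)x\}\subset\mathcal C_{r_0}=\{tx:x\in\bar\Omega,0<t\le r_0\}$ such that for each $x_0\in\bar\Omega$ there are $P\in\bar D$, $b\in(\kappa|P|,|P|)$ with $\rho\ge h(\cdot,P,b)$ on $\bar\Omega$, $\rho(x_0)=h(x_0,P,b)$, $\bar\Omega\subset\{x:x\cdot\frac P{|P|}\ge I(P,b)\}$ (''$\Gamma(P,b)$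 supports $\mathcal R$ at $\rho(x_0)x_0$''). Case $-1<\kappa<0$: there is $\tau\in(0,1+\kappa)$ with $x\cdot P\ge(\tau-\kappa)|P|$ on $\bar\Omega\times\bar D$; $r_0\in(0,\frac\tau{1-\kappa}\operatorname{dist}(0,\bar D))$; $h(x,P,b)=\frac{(b-\kappa^2x\cdot P)+\sqrt{(b-\kappa^2x\cdot P)^2-(1-\kappa^2)(b^2-\kappa^2|P|^2)}}{1-\kappa^2}$, $\mathcal O(P,b)=\{h(x,P,b)x:x\cdot P\ge b\}$. Near field refractor: $\mathcal R\subset\mathcal C_{r_0}$ such that for each $x_0$ there are $P\in\bar D$, $b\in(\kappa|P|,|P|)$ with $\rho\le h(\cdot,P,b)$ on $\bar\Omega$ and $\rho(x_0)=h(x_0,P,b)$ (''$\mathcal O(P,b)$ supports $\mathcal R$ at $\rho(x_0)x_0$''). In both cases for all $m\in S^{n-1}$, $x\in\mathcal C_{r_0}$, $\bar D\cap\{x+tm:t\ge0\}$ has at most one point. $\mathcal N_{\mathcal R}(x)=\{P\in\bar D:$ some oval with focus data $(P,b)$ supports $\mathcal R$ at $\rho(x)x\}$; $\mathcal T_{\mathcal R}(P)=\{x\in\bar\Omega:P\in\mathcal N_{\mathcal R}(x)\}$. *)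

From HB Require Import structures.
From mathcomp Require Import all_boot all_order all_algebra.
From mathcomp Require Import all_classical all_reals all_analysis.
Set Implicit Arguments. Unset Strict Implicit. Unset Printing Implicit Defensive.
Import Order.TTheory GRing.Theory Num.Theory numFieldNormedType.Exports.
Local Open Scope classical_set_scope.
Local Open Scope ring_scope.

Section NearField.
Variables (R : realType) (n : nat).
Notation vec := 'rV[R]_n.

(* Euclidean inner product and norm (the library norm on matrices is the max norm) *)
Definition dotp (x y : vec) : R := \sum_(i < n) x ord0 i * y ord0 i.
Definition enorm (x : vec) : R := Num.sqrt (dotp x x).

Definition sphere : set vec := [set x | enorm x = 1].

Definition sphere_domain (Omega : set vec) : Prop :=
  [/\ Omega !=set0, Omega `<=` sphere,
      (exists U : set vec, open U /\ Omega = U `&` sphere) & connected Omega].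

Definition sphere_boundary (Omega : set vec) : set vec :=
  [set x | sphere x /\ forall e : R, 0 < e ->
     (exists2 y, Omega y & enorm (y - x) < e) /\
     (exists2 y, (sphere `\` Omega) y & enorm (y - x) < e)].

(* (n-1)-dimensional Hausdorff (= surface) measure zero *)
Definition surface_null (A : set vec) : Prop :=
  forall eps : R, 0 < eps -> exists (c : nat -> vec) (r : nat -> R),
    (forall i, 0 <= r i) /\
    (A `<=` \bigcup_i [set x | enorm (x - c i) < r i]) /\
    (forall N, \sum_(i < N) (r i) ^+ n.-1 < eps).

Definition evec (i : 'I_n) : vec := delta_mx ord0 i.

Definition partial_derivable (F : vec -> R) (i : 'I_n) (x : vec) : Prop :=
  derivable (fun t : R => F (x + t *: evec i)) 0 1.
Definition partial (F : vec -> R) (i : 'I_n) (x : vec) : R :=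
  derive1 (fun t : R => F (x + t *: evec i)) 0.

Definition hypersurface (S : set vec) : Prop :=
  forall p, S p -> exists (U : set vec) (F : vec -> R),
    [/\ open U /\ U p,
        (forall i x, U x -> partial_derivable F i x),
        (forall i x, U x -> {for x, continuous (partial F i)}),
        S `&` U = [set x | U x /\ F x = 0] &
        (forall x, (S `&` U) x -> exists i, partial F i x != 0)].

Definition target_set (D : set vec) : Prop :=
  [/\ (exists S, hypersurface S /\ D `<=` S), compact (closure D) &
      ~ closure D 0].

Definition cone (Omega : set vec) (r0 : R) : set vec :=
  [set z | exists x t, [/\ closure Omega x, 0 < t, t <= r0 & z = t *: x]].

Definition h_ellipsoid (kappa : R) (x P : vec) (b : R) : R :=
  ((kappa ^+ 2 * dotp x P - b) -
    Num.sqrt ((kappa ^+ 2 * dotp x P - b) ^+ 2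
              - (kappa ^+ 2 - 1) * (kappa ^+ 2 * enorm P ^+ 2 - b ^+ 2)))
  / (kappa ^+ 2 - 1).
Definition I_ellipsoid (kappa : R) (P : vec) (b : R) : R :=
  (b + Num.sqrt ((kappa ^+ 2 - 1) * (kappa ^+ 2 * enorm P ^+ 2 - b ^+ 2)))
  / (kappa ^+ 2 * enorm P).

Definition h_oval (kappa : R) (x P : vec) (b : R) : R :=
  ((b - kappa ^+ 2 * dotp x P) +
    Num.sqrt ((b - kappa ^+ 2 * dotp x P) ^+ 2
              - (1 - kappa ^+ 2) * (b ^+ 2 - kappa ^+ 2 * enorm P ^+ 2)))
  / (1 - kappa ^+ 2).

Definition standing (kappa tau r0 : R) (Omega D : set vec) : Prop :=
  [/\ sphere_domain Omega, surface_null (sphere_boundary Omega), target_set D,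
      (kappa < -1 /\
        [/\ 0 < tau, tau < 1 - kappa^-1,
            (forall x P, closure Omega x -> closure D P ->
               tau + kappa^-1 <= dotp x P / enorm P),
            0 < r0 &
            r0 < tau ^+ 2 * kappa ^+ 2
                 / ((1 + Num.sqrt 2) ^+ 2 * (1 - kappa) ^+ 2)
                 * inf [set enorm P | P in closure D]])
      \/
      (-1 < kappa /\ kappa < 0 /\
        [/\ 0 < tau, tau < 1 + kappa,
            (forall x P, closure Omega x -> closure D P ->
               (tau - kappa) * enorm P <= dotp x P),
            0 < r0 &
            r0 < tau / (1 - kappa) * inf [set enorm P | P in closure D]]) &
      (forall (m x : vec), sphere m -> cone Omega r0 x ->
         forall P Q, closure D P -> closure D Q ->
         (exists2 t : R, 0 <= t & P = x + t *: m) ->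
         (exists2 t : R, 0 <= t & Q = x + t *: m) -> P = Q)].

(* "the oval with focus data (P,b) supports R = {rho(x) x} at rho(x0) x0" *)
Definition supports (kappa : R) (Omega : set vec) (rho : vec -> R)
    (x0 P : vec) (b : R) : Prop :=
  [/\ kappa * enorm P < b, b < enorm P &
    if kappa < -1 then
      [/\ (forall x, closure Omega x -> h_ellipsoid kappa x P b <= rho x),
          rho x0 = h_ellipsoid kappa x0 P b &
          (forall x, closure Omega x -> I_ellipsoid kappa P b <= dotp x P / enorm P)]
    else
      (forall x, closure Omega x -> rho x <= h_oval kappa x P b) /\
      rho x0 = h_oval kappa x0 P b].

Definition near_field_refractor (kappa r0 : R) (Omega D : set vec)
    (rho : vec -> R) : Prop :=
  (forall x, closure Omega x -> cone Omega r0 (rho x *: x)) /\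
  (forall x0, closure Omega x0 ->
     exists P b, closure D P /\ supports kappa Omega rho x0 P b).

Definition normal_map (kappa : R) (Omega D : set vec) (rho : vec -> R)
    (x : vec) : set vec :=
  [set P | closure D P /\ exists b, supports kappa Omega rho x P b].

Definition tracing_map (kappa : R) (Omega D : set vec) (rho : vec -> R)
    (P : vec) : set vec :=
  [set x | closure Omega x /\ normal_map kappa Omega D rho x P].

End NearField.

From HB Require Import structures.
From mathcomp Require Import all_boot all_order all_algebra.
From mathcomp Require Import all_classical all_reals all_analysis.
From mathcomp Require Import ring lra.
Set Implicit Arguments. Unset Strict Implicit. Unset Printing Implicit Defensive.
Import Order.TTheory GRing.Theory Num.Theory numFieldNormedType.Exports.
Local Open Scope classical_set_scope.
Local Open Scope ring_scope.

(* A point x of the closure of T(P) is a limit of points x_k of T(P), supported by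
   ovals with focus P and parameters b_k in [kappa |P|, |P|]; along a subsequence
   b_k -> b.  The ovals depend continuously on (x, b), so the support inequality
   passes to the limit, and the contact rho(x) = h(x, P, b) follows by comparing
   with an oval that supports the refractor at x itself, which needs no continuity
   of rho.  Finally b is not an endpoint: for b = kappa |P| the oval passes
   through the origin, while rho does not vanish on the cone C_{r0}, and for
   b = |P| it forces rho(x) >= |P| > r0. *)

Section euclidean.
Context {R : realType} {n : nat}.
Notation vec := 'rV[R]_n.
Implicit Types (x y : vec) (a c : R).

Lemma dotp_ge0 x : 0 <= dotp x x.
Proof. by apply: sumr_ge0 => i _; rewrite -expr2 sqr_ge0. Qed.

Lemma dotp_eq0 x : (dotp x x == 0) = (x == 0).
Proof.
apply/idP/eqP => [|->]; last by rewrite /dotp big1 // => i _; rewrite mxE mul0r.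
rewrite psumr_eq0 => [/allP x0|i _]; last by rewrite -expr2 sqr_ge0.
apply/rowP => i; have /implyP/(_ isT) := x0 i (mem_index_enum _).
by rewrite mxE mulf_eq0 orbb => /eqP.
Qed.

Lemma dotp0r y : dotp 0 y = 0.
Proof. by rewrite /dotp big1 // => i _; rewrite mxE mul0r. Qed.

Lemma dotpr0 x : dotp x 0 = 0.
Proof. by rewrite /dotp big1 // => i _; rewrite mxE mulr0. Qed.

Lemma dotpZBZ a c x y : dotp (a *: x - c *: y) (a *: x - c *: y) =
  a ^+ 2 * dotp x x - 2 * a * c * dotp x y + c ^+ 2 * dotp y y.
Proof.
rewrite /dotp !mulr_sumr -sumrB -big_split /=; apply: eq_bigr => i _.
by rewrite !mxE; ring.
Qed.

Lemma enorm_sqr x : enorm x ^+ 2 = dotp x x.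
Proof. exact/sqr_sqrtr/dotp_ge0. Qed.

Lemma enorm_eq0 x : (enorm x == 0) = (x == 0).
Proof. by rewrite sqrtr_eq0 le_eqVlt ltNge dotp_ge0 orbF dotp_eq0. Qed.

Lemma enorm_gt0 x : (0 < enorm x) = (x != 0).
Proof. by rewrite lt_def enorm_eq0 sqrtr_ge0 andbT. Qed.

Lemma dotpZ a x : dotp (a *: x) (a *: x) = a ^+ 2 * dotp x x.
Proof. by rewrite /dotp mulr_sumr; apply: eq_bigr => i _; rewrite !mxE; ring. Qed.

Lemma enormZ a x : enorm (a *: x) = `|a| * enorm x.
Proof. by rewrite /enorm dotpZ sqrtrM ?sqr_ge0 // sqrtr_sqr. Qed.

Lemma dotp_le_enorm x y : dotp x y <= enorm x * enorm y.
Proof.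
have [->|x0] := eqVneq x 0; first by rewrite dotp0r mulr_ge0 ?sqrtr_ge0.
have [->|y0] := eqVneq y 0; first by rewrite dotpr0 mulr_ge0 ?sqrtr_ge0.
have := dotp_ge0 (enorm y *: x - enorm x *: y).
have -> : dotp (enorm y *: x - enorm x *: y) (enorm y *: x - enorm x *: y) =
    2 * (enorm x * enorm y) * (enorm x * enorm y - dotp x y).
  by rewrite dotpZBZ -!enorm_sqr; ring.
by rewrite pmulr_rge0 ?subr_ge0 // mulr_gt0 ?ltr0Sn // mulr_gt0 ?enorm_gt0.
Qed.

Lemma dotpl_continuous y : continuous (fun x : vec => dotp x y).
Proof.
apply: (@continuous_big R _ +%R 0 xpredT) => [[a b]|i _ x].
  exact: add_continuous.
exact: cvgMr_tmp (@coord_continuous R 1 n ord0 i x).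
Qed.

Lemma enorm_continuous : continuous (@enorm R n).
Proof.
have dotp_cont : continuous (fun x : vec => dotp x x).
  apply: (@continuous_big R _ +%R 0 xpredT) => [[a b]|i _ x].
    exact: add_continuous.
  exact: cvgM (@coord_continuous R 1 n ord0 i x) (@coord_continuous R 1 n ord0 i x).
move=> x; exact: continuous_comp (dotp_cont x) (@sqrt_continuous R _).
Qed.

Lemma sphere_closed : closed (@sphere R n).
Proof.
have -> : @sphere R n = @enorm R n @^-1` [set 1] by [].
by apply: preimage_closed; [move=> x _; exact: enorm_continuous | exact: closed_eq].
Qed.

End euclidean.

Section filter_limits.
Context {R : realType} {T : Type} {F : set_system T} {FF : Filter F}.
Implicit Types (f : T -> R) (a : R).

Lemma cvg_sqrtr f a : f @ F --> a -> Num.sqrt (f t) @[t --> F] --> Num.sqrt a.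
Proof. exact: (continuous_cvg _ (@sqrt_continuous R a)). Qed.

Lemma cvg_sqr f a : f @ F --> a -> f t ^+ 2 @[t --> F] --> a ^+ 2.
Proof. exact: (continuous_cvg _ (@exprn_continuous R 2 a)). Qed.

End filter_limits.

Section oval_formulas.
Context {R : realType} {n : nat}.
Notation vec := 'rV[R]_n.
Implicit Types (x P : vec) (kappa b : R).

Lemma h_ellipsoid_kappa_enorm kappa x P :
  kappa * enorm P <= kappa ^+ 2 * dotp x P ->
  h_ellipsoid kappa x P (kappa * enorm P) = 0.
Proof.
move=> le_kP; rewrite /h_ellipsoid.
have -> : (kappa ^+ 2 * dotp x P - kappa * enorm P) ^+ 2 - (kappa ^+ 2 - 1) *
    (kappa ^+ 2 * enorm P ^+ 2 - (kappa * enorm P) ^+ 2) =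
    (kappa ^+ 2 * dotp x P - kappa * enorm P) ^+ 2 by ring.
by rewrite sqrtr_sqr ger0_norm ?subr_ge0 // subrr mul0r.
Qed.

Lemma h_ellipsoid_enorm kappa x P : kappa ^+ 2 != 1 -> dotp x P = enorm P ->
  h_ellipsoid kappa x P (enorm P) = enorm P.
Proof.
move=> k2 xP; rewrite /h_ellipsoid xP.
have -> : (kappa ^+ 2 * enorm P - enorm P) ^+ 2 - (kappa ^+ 2 - 1) *
    (kappa ^+ 2 * enorm P ^+ 2 - enorm P ^+ 2) = 0 by ring.
have k21 : kappa ^+ 2 - 1 != 0 by rewrite subr_eq0.
by rewrite sqrtr0 subr0; field.
Qed.

Lemma I_ellipsoid_enorm kappa P : 1 <= kappa ^+ 2 -> P != 0 ->
  I_ellipsoid kappa P (enorm P) = 1.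
Proof.
move=> k2 P0; rewrite /I_ellipsoid.
have -> : (kappa ^+ 2 - 1) * (kappa ^+ 2 * enorm P ^+ 2 - enorm P ^+ 2) =
    ((kappa ^+ 2 - 1) * enorm P) ^+ 2 by ring.
rewrite sqrtr_sqr ger0_norm ?mulr_ge0 ?subr_ge0 ?sqrtr_ge0 //.
have kP : kappa ^+ 2 * enorm P != 0.
  by rewrite mulf_neq0 ?enorm_eq0 // gt_eqF // (lt_le_trans ltr01).
by apply/(mulIf kP); rewrite mul1r divfK //; ring.
Qed.

Lemma h_oval_kappa_enorm kappa x P :
  kappa * enorm P <= kappa ^+ 2 * dotp x P ->
  h_oval kappa x P (kappa * enorm P) = 0.
Proof.
move=> le_kP; rewrite /h_oval.
have -> : (kappa * enorm P - kappa ^+ 2 * dotp x P) ^+ 2 - (1 - kappa ^+ 2) *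
    ((kappa * enorm P) ^+ 2 - kappa ^+ 2 * enorm P ^+ 2) =
    (kappa * enorm P - kappa ^+ 2 * dotp x P) ^+ 2 by ring.
by rewrite sqrtr_sqr ler0_norm ?subr_le0 // subrr mul0r.
Qed.

Lemma h_oval_enorm_ge kappa x P : kappa ^+ 2 < 1 -> dotp x P <= enorm P ->
  enorm P <= h_oval kappa x P (enorm P).
Proof.
move=> k2 xP; rewrite /h_oval ler_pdivlMr ?subr_gt0 //.
set d := Num.sqrt _; have : 0 <= d := sqrtr_ge0 _.
have : 0 <= kappa ^+ 2 := sqr_ge0 kappa.
nra.
Qed.

Context {T : Type} (F : set_system T) {FF : Filter F}.
Variables (u : T -> vec) (v : T -> R) (x : vec) (b : R).
Hypotheses (u_cvg : u @ F --> x) (v_cvg : v @ F --> b).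

Let dotp_cvg P : dotp (u t) P @[t --> F] --> dotp x P.
Proof. exact: (continuous_cvg _ (@dotpl_continuous _ _ P x) u_cvg). Qed.

Lemma h_ellipsoid_cvg kappa P :
  h_ellipsoid kappa (u t) P (v t) @[t --> F] --> h_ellipsoid kappa x P b.
Proof.
have lin : kappa ^+ 2 * dotp (u t) P - v t @[t --> F] --> kappa ^+ 2 * dotp x P - b.
  by apply: cvgB => //; apply: cvgMl_tmp.
apply: cvgMr_tmp; apply: (cvgB lin); apply: cvg_sqrtr; apply: cvgB; first exact: cvg_sqr.
by apply: cvgMl_tmp; apply: cvgB; [exact: cvg_cst | exact: cvg_sqr].
Qed.

Lemma h_oval_cvg kappa P :
  h_oval kappa (u t) P (v t) @[t --> F] --> h_oval kappa x P b.
Proof.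
have lin : v t - kappa ^+ 2 * dotp (u t) P @[t --> F] --> b - kappa ^+ 2 * dotp x P.
  by apply: cvgB => //; apply: cvgMl_tmp.
apply: cvgMr_tmp; apply: (cvgD lin); apply: cvg_sqrtr; apply: cvgB; first exact: cvg_sqr.
by apply: cvgMl_tmp; apply: cvgB; [exact: cvg_sqr | exact: cvg_cst].
Qed.

Lemma I_ellipsoid_cvg kappa P :
  I_ellipsoid kappa P (v t) @[t --> F] --> I_ellipsoid kappa P b.
Proof.
apply: cvgMr_tmp; apply: cvgD => //; apply: cvg_sqrtr; apply: cvgMl_tmp.
by apply: cvgB; [exact: cvg_cst | exact: cvg_sqr].
Qed.

End oval_formulas.

Lemma increasing_seq_leq (f : nat -> nat) k : increasing_seq f -> (k <= f k)%N.
Proof.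
move=> /increasing_seqP f_incr; elim: k => // k ih.
exact: leq_ltn_trans ih (f_incr k).
Qed.

Lemma cvg_subseq {T : topologicalType} (u : nat -> T) (f : nat -> nat) (x : T) :
  increasing_seq f -> u @ \oo --> x -> (u \o f) @ \oo --> x.
Proof.
move=> f_incr u_cvg; apply: cvg_comp u_cvg => A [N _ NA].
by exists N => // k /= Nk; apply/NA/(leq_trans Nk)/increasing_seq_leq.
Qed.

Lemma closure_cvg_seq {R : realType} {V : normedModType R} (A : set V) (x : V) :
  closure A x -> exists2 u : nat -> V, (forall k, A (u k)) & u @ \oo --> x.
Proof.
move=> Ax; have near_x k : exists y, A y /\ `|x - y| < k.+1%:R^-1.
  have k_gt0 : 0 < k.+1%:R^-1 :> R by rewrite invr_gt0.
  by have [y [Ay xy]] := Ax _ (nbhs_ball_norm x (PosNum k_gt0)); exists y.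
have [u uP] := choice near_x; exists u => [k|]; first exact: (uP k).1.
apply/cvgrPdist_lt => e e0; near=> k; apply: lt_trans (uP k).2 _.
near: k; exact: (near_infty_natSinv_lt (PosNum e0)).
Unshelve. all: by end_near.
Qed.

Lemma itv_subseq_cvg {R : realType} (u : nat -> R) (lo hi : R) :
  (forall k, lo <= u k <= hi) ->
  exists2 f : nat -> nat, increasing_seq f &
    exists2 b, (u \o f) @ \oo --> b & lo <= b <= hi.
Proof.
move=> u_itv; have u_bnd : bounded_fun u.
  rewrite /bounded_near; near=> M => k _ /=.
  apply: (@le_trans _ _ (`|lo| + `|hi|)); last first.
    by near: M; apply: nbhs_pinfty_ge; exact: num_real.
  have := normr_ge0 lo; have := normr_ge0 hi; have := ler_norm (- lo); have := ler_norm hi.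
  rewrite normrN ler_norml; case/andP: (u_itv k) => *; apply/andP; split; lra.
have [f f_incr /cvg_ex[b ufb]] := bolzano_weierstrass u_bnd.
exists f => //; exists b => //.
apply/andP; split.
- apply: (closed_cvg _ (@closed_ge R lo) _ _ ufb).
  by apply: nearW => k; case/andP: (u_itv (f k)).
- apply: (closed_cvg _ (@closed_le R hi) _ _ ufb).
  by apply: nearW => k; case/andP: (u_itv (f k)).
Unshelve. all: by end_near.
Qed.

Lemma closure_sub_closed {T : topologicalType} (A C : set T) :
  closed C -> A `<=` C -> closure A `<=` C.
Proof. by rewrite closureE; exact: smallest_sub. Qed.

Lemma lower_support_limit {R : realFieldType} {V : Type} (A : set V)
    (rho g : V -> R) (f : V -> R -> R) (xs : nat -> V) (bs : nat -> R) x b :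
  A x -> (forall k, A (xs k)) ->
  (forall y, f y (bs k) @[k --> \oo] --> f y b) ->
  f (xs k) (bs k) @[k --> \oo] --> f x b ->
  g (xs k) @[k --> \oo] --> g x ->
  (forall k y, A y -> f y (bs k) <= rho y) ->
  (forall k, rho (xs k) = f (xs k) (bs k)) ->
  (forall y, A y -> g y <= rho y) -> rho x = g x ->
  (forall y, A y -> f y b <= rho y) /\ rho x = f x b.
Proof.
move=> Ax Axs f_cvg fxs_cvg g_cvg f_le rho_xs g_le rho_x.
have fb_le y : A y -> f y b <= rho y.
  by move=> Ay; apply: (ler_cvg_to (f_cvg y) (cvg_cst _)); apply: nearW => k; exact: f_le.
split => //; apply/eqP; rewrite eq_le fb_le // andbT rho_x.
by apply: (ler_cvg_to g_cvg fxs_cvg); apply: nearW => k; rewrite -rho_xs g_le.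
Qed.

Section refractor.
Context {R : realType} {n : nat}.
Notation vec := 'rV[R]_n.
Implicit Types (Omega D : set vec) (rho : vec -> R) (x y P : vec).

Lemma closure_sub_sphere Omega : Omega `<=` @sphere R n -> closure Omega `<=` @sphere R n.
Proof. exact: closure_sub_closed sphere_closed. Qed.

Lemma refractor_norm_rho kappa r0 Omega D rho y :
  Omega `<=` @sphere R n -> near_field_refractor kappa r0 Omega D rho ->
  closure Omega y -> 0 < `|rho y| <= r0.
Proof.
move=> Osph [in_cone _] Oy; have [z [t [Oz t_gt0 t_le rho_y]]] := in_cone y Oy.
have := congr1 (@enorm R n) rho_y; rewrite !enormZ.
rewrite (closure_sub_sphere Osph Oy) (closure_sub_sphere Osph Oz) !mulr1.
by rewrite (gtr0_norm t_gt0) => ->; rewrite t_gt0.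
Qed.

Lemma inf_enorm_bounds D P : D P -> 0 <= inf [set enorm Q | Q in D] <= enorm P.
Proof.
move=> DP; have enorm_lb : lbound [set enorm Q | Q in D] 0.
  by move=> _ [Q _ <-]; exact: sqrtr_ge0.
apply/andP; split; first by apply: lb_le_inf enorm_lb; exists (enorm P), P.
by apply: ge_inf; [exists 0 | exists P].
Qed.

Lemma ellipsoid_radius_factor_le1 (kappa tau : R) :
  kappa < -1 -> 0 < tau -> tau < 1 - kappa^-1 ->
  tau ^+ 2 * kappa ^+ 2 / ((1 + Num.sqrt 2) ^+ 2 * (1 - kappa) ^+ 2) <= 1.
Proof.
move=> k1 tau_gt0 tau_lt; have sqrt2_ge0 := @sqrtr_ge0 R 2.
rewrite ler_pdivrMr ?mul1r; last by rewrite mulr_gt0 // exprn_gt0 //; lra.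
have tk_lt : tau * - kappa < 1 - kappa.
  have kN : 0 < - kappa by lra.
  have k_neq0 : kappa != 0 by apply: ltr0_neq0; lra.
  by move: tau_lt; rewrite -(ltr_pM2r kN) mulrBl !mulrN mulVf //; lra.
have : 1 <= (1 + Num.sqrt 2) ^+ 2 :> R by nra.
have : tau ^+ 2 * kappa ^+ 2 <= (1 - kappa) ^+ 2.
  have tk_gt0 : 0 < tau * - kappa by rewrite mulr_gt0 //; lra.
  have : 0 < (1 - kappa - tau * - kappa) * (1 - kappa + tau * - kappa).
    by rewrite mulr_gt0 //; lra.
  nra.
have : 0 <= (1 - kappa) ^+ 2 := sqr_ge0 _.
nra.
Qed.

Lemma oval_radius_factor_le1 (kappa tau : R) :
  kappa < 0 -> tau < 1 + kappa -> tau / (1 - kappa) <= 1.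
Proof. by move=> k0 tau_lt; rewrite ler_pdivrMr ?mul1r; lra. Qed.

Lemma standing_r0_lt_enorm kappa tau r0 Omega D P :
  standing kappa tau r0 Omega D -> closure D P -> r0 < enorm P.
Proof.
move=> [_ _ _ cases _] DP; have /andP[inf_ge0 inf_le] := inf_enorm_bounds DP.
case: cases => [[k1 [tau_gt0 tau_lt _ _ r0_lt]] | [_ [k0 [_ tau_lt _ _ r0_lt]]]].
- have := ellipsoid_radius_factor_le1 k1 tau_gt0 tau_lt; nra.
- have := oval_radius_factor_le1 k0 tau_lt; nra.
Qed.

End refractor.

Section tracing_limit.
Context {R : realType} {n : nat}.
Notation vec := 'rV[R]_n.
Variables (kappa tau r0 : R) (Omega D : set vec) (rho : vec -> R) (P : vec).
Hypotheses (stand : standing kappa tau r0 Omega D)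
  (refr : near_field_refractor kappa r0 Omega D rho) (DP : closure D P).
Variables (xs : nat -> vec) (bs : nat -> R) (x : vec) (b : R).
Hypotheses (Oxs : forall k, closure Omega (xs k))
  (xs_supp : forall k, supports kappa Omega rho (xs k) P (bs k))
  (xs_cvg : xs @ \oo --> x) (bs_cvg : bs @ \oo --> b)
  (Ox : closure Omega x) (b_itv : kappa * enorm P <= b <= enorm P).

Let Osph : Omega `<=` @sphere R n.
Proof. by case: stand => -[]. Qed.

Let P_neq0 : P != 0.
Proof. by case: stand => _ _ [_ _ D0] _ _; apply: contraPneq D0 => <-. Qed.

Let rho_x_neq0 : rho x != 0.
Proof.
by have /andP[+ _] := refractor_norm_rho Osph refr Ox; rewrite normr_gt0.
Qed.

Let rho_x_lt : rho x < enorm P.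
Proof.
have /andP[_ rho_le] := refractor_norm_rho Osph refr Ox.
exact: le_lt_trans (ler_norm _) (le_lt_trans rho_le (standing_r0_lt_enorm stand DP)).
Qed.

Let xP_le : dotp x P <= enorm P.
Proof.
by have := dotp_le_enorm x P; rewrite (closure_sub_sphere Osph Ox) mul1r.
Qed.

Lemma ellipsoid_supports_limit :
  kappa < -1 -> kappa * enorm P <= kappa ^+ 2 * dotp x P ->
  supports kappa Omega rho x P b.
Proof.
move=> k1 kP_le; rewrite /supports k1.
have supp k := xs_supp k; rewrite /supports k1 in supp.
have [Q [b0 [_ supQ]]] := refr.2 x Ox; rewrite /supports k1 in supQ.
case: supQ => _ _ [Q_le rho_xQ _].
have [below rho_x] : (forall y, closure Omega y -> h_ellipsoid kappa y P b <= rho y)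
    /\ rho x = h_ellipsoid kappa x P b.
  apply: (lower_support_limit (f := fun y c => h_ellipsoid kappa y P c)
    (g := fun y => h_ellipsoid kappa y Q b0) (bs := bs) Ox Oxs).
  - by move=> y; apply: h_ellipsoid_cvg => //; exact: cvg_cst.
  - exact: h_ellipsoid_cvg.
  - by apply: h_ellipsoid_cvg => //; exact: cvg_cst.
  - by move=> k; case: (supp k) => _ _ [].
  - by move=> k; case: (supp k) => _ _ [].
  - exact: Q_le.
  - exact: rho_xQ.
have I_le y : closure Omega y -> I_ellipsoid kappa P b <= dotp y P / enorm P.
  move=> Oy; apply: (ler_cvg_to (I_ellipsoid_cvg bs_cvg (kappa := kappa) (P := P))
    (cvg_cst (dotp y P / enorm P))).
  by apply: nearW => k; case: (supp k) => _ _ [_ _]; apply.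
split => //.
- rewrite lt_neqAle andbC; case/andP: b_itv => -> _ /=.
  apply: contra_neq rho_x_neq0 => b_eq.
  by rewrite rho_x -b_eq h_ellipsoid_kappa_enorm.
- rewrite lt_neqAle; case/andP: b_itv => _ -> /=; rewrite andbT.
  apply: contra_ltN rho_x_lt => /eqP b_eq.
  have k2_ge1 : 1 <= kappa ^+ 2 by nra.
  have := I_le x Ox; rewrite b_eq I_ellipsoid_enorm // ler_pdivlMr ?enorm_gt0 //.
  rewrite mul1r => P_le.
  have xP_eq : dotp x P = enorm P by apply/eqP; rewrite eq_le P_le xP_le.
  by rewrite rho_x b_eq h_ellipsoid_enorm // gt_eqF //; nra.
Qed.

Lemma oval_supports_limit :
  -1 < kappa -> kappa < 0 -> kappa * enorm P <= kappa ^+ 2 * dotp x P ->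
  supports kappa Omega rho x P b.
Proof.
move=> k1 k0 kP_le; have nk1 : (kappa < -1) = false by apply/negbTE; rewrite -leNgt ltW.
rewrite /supports nk1.
have supp k := xs_supp k; rewrite /supports nk1 in supp.
have [Q [b0 [_ supQ]]] := refr.2 x Ox; rewrite /supports nk1 in supQ.
case: supQ => _ _ [Q_ge rho_xQ].
have [] : (forall y, closure Omega y -> - h_oval kappa y P b <= - rho y)
    /\ - rho x = - h_oval kappa x P b.
  apply: (lower_support_limit (f := fun y c => - h_oval kappa y P c)
    (g := fun y => - h_oval kappa y Q b0) (bs := bs) Ox Oxs).
  - by move=> y; apply: cvgN; apply: h_oval_cvg => //; exact: cvg_cst.
  - by apply: cvgN; exact: h_oval_cvg.
  - by apply: cvgN; apply: h_oval_cvg => //; exact: cvg_cst.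
  - by move=> k y Oy; rewrite lerN2; case: (supp k) => _ _ [+ _]; apply.
  - by move=> k; case: (supp k) => _ _ [_ ->].
  - by move=> y Oy; rewrite lerN2 Q_ge.
  - by rewrite rho_xQ.
move=> above /oppr_inj rho_x; split.
- rewrite lt_neqAle andbC; case/andP: b_itv => -> _ /=.
  apply: contra_neq rho_x_neq0 => b_eq.
  by rewrite rho_x -b_eq h_oval_kappa_enorm.
- rewrite lt_neqAle; case/andP: b_itv => _ -> /=; rewrite andbT.
  apply: contra_ltN rho_x_lt => /eqP b_eq.
  by rewrite rho_x b_eq h_oval_enorm_ge //; nra.
- by split => // y Oy; rewrite -lerN2 above.
Qed.

Lemma tracing_limit_supports : supports kappa Omega rho x P b.
Proof.
have [_ _ _ cases _] := stand.
case: cases => [[k1 [tau_gt0 _ dotp_ge _ _]] | [k1 [k0 [tau_gt0 tau_lt dotp_ge _ _]]]].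
- apply: (ellipsoid_supports_limit k1).
  have := dotp_ge x P Ox DP; rewrite ler_pdivlMr ?enorm_gt0 //.
  move=> /(ler_wpM2l (sqr_ge0 kappa)).
  have k_neq0 : kappa != 0 by apply: ltr0_neq0; lra.
  have -> : kappa ^+ 2 * ((tau + kappa^-1) * enorm P) =
      kappa ^+ 2 * tau * enorm P + kappa * enorm P by field.
  have : 0 <= kappa ^+ 2 * tau * enorm P.
    by rewrite mulr_ge0 ?sqrtr_ge0 // mulr_ge0 ?sqr_ge0 ?ltW.
  lra.
- apply: (oval_supports_limit k1 k0).
  have P_ge0 : 0 <= enorm P by exact: sqrtr_ge0.
  have xP_ge0 : 0 <= dotp x P.
    by apply: le_trans (dotp_ge x P Ox DP); rewrite mulr_ge0 //; lra.
  have := mulr_ge0 (sqr_ge0 kappa) xP_ge0; nra.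
Qed.

End tracing_limit.

Theorem lemma3p5 (R : realType) (n : nat) (kappa tau r0 : R)
    (Omega D : set 'rV[R]_n) (rho : 'rV[R]_n -> R) (P : 'rV[R]_n) :
  standing kappa tau r0 Omega D ->
  near_field_refractor kappa r0 Omega D rho ->
  closure D P ->
  closed (tracing_map kappa Omega D rho P) /\
  tracing_map kappa Omega D rho P `<=` closure Omega.
Proof.
move=> stand refr DP; set T := tracing_map kappa Omega D rho P.
have T_sub : T `<=` closure Omega by move=> y [].
split => //; rewrite closure_id eqEsubset; split => [|x Tx]; first exact: subset_closure.
have Ox : closure Omega x := closure_sub_closed (@closed_closure _ _) T_sub Tx.
have [xs Txs xs_cvg] := closure_cvg_seq Tx.
have /choice[bs bsP] k : exists b, kappa * enorm P <= b <= enorm P /\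
    supports kappa Omega rho (xs k) P b.
  have [_ [_ [b supp]]] := Txs k; exists b; split => //.
  by case: supp => /ltW-> /ltW->.
have [f f_incr [b bsf_cvg b_itv]] := itv_subseq_cvg (fun k => (bsP k).1).
split => //; split => //; exists b.
apply: (tracing_limit_supports stand refr DP (xs := xs \o f) (bs := bs \o f)) => //.
- by move=> k; exact: (Txs (f k)).1.
- by move=> k; exact: (bsP (f k)).2.
- exact: cvg_subseq.
Qed.
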